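(* Let $k$ be a positive integer, $p\ge 1$ and $0<\delta\le 1$. Let $(\Omega,\mathcal{F},\mathbb{P})$ be a probability space, $\Sigma$ a $k$-semiring on $\Omega$ with $\Sigma\subseteq\mathcal{F}$, $\mathcal{Q}$ a finite partition of $\Omega$ with $\mathcal{Q}\subseteq\Sigma$, and $f\in L_p(\Omega,\mathcal{F},\mathbb{P})$ with $\|f-\mathbb{E}(f\mid\mathcal{A}_{\mathcal{Q}})\|_{\Sigma}>\delta$. Then there exists a refinement $\mathcal{R}$ of $\mathcal{Q}$ with $\mathcal{R}\subseteq\Sigma$ and $|\mathcal{R}|\le|\mathcal{Q}|(k+1)$ such that $\|\mathbb{E}(f\mid\mathcal{A}_{\mathcal{R}})-\mathbb{E}(f\mid\mathcal{A}_{\mathcal{Q}})\|_{L_p}>\delta$.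
   Context: A collection $\Sigma$ of subsets of a nonempty set $\Omega$ is a $k$-semiring on $\Omega$ if: $\emptyset,\Omega\in\Sigma$; $S\cap T\in\Sigma$ for $S,T\in\Sigma$; for $S,T\in\Sigma$ there exist $\ell\in\{1,\dots,k\}$ and pairwise disjoint $R_1,\dots,R_\ell\in\Sigma$ with $S\setminus T=R_1\cup\dots\cup R_\ell$. The $\Sigma$-uniformity norm is $\|g\|_{\Sigma}=\sup\{|\int_S g\,d\mathbb{P}|:S\in\Sigma\}$. For a finite partition $\mathcal{Q}$, $\mathcal{A}_{\mathcal{Q}}$ is the $\sigma$-algebra generated by $\mathcal{Q}$; $\mathcal{Q}\subseteq\Sigma$ means every member of $\mathcal{Q}$ lies in $\Sigma$. *)

From HB Require Import structures.
From mathcomp Require Import all_boot all_order all_algebra finmap.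
From mathcomp Require Import all_classical all_reals all_analysis.
Set Implicit Arguments. Unset Strict Implicit. Unset Printing Implicit Defensive.
Import Order.TTheory GRing.Theory Num.Theory.
Local Open Scope classical_set_scope.
Local Open Scope ring_scope.

(* k-semiring on the whole type T (Omega = [set: T]). *)
Definition ksemiring (T : Type) (k : nat) (Sigma : set (set T)) : Prop :=
  [/\ Sigma set0, Sigma setT,
      (forall S U, Sigma S -> Sigma U -> Sigma (S `&` U)) &
      (forall S U, Sigma S -> Sigma U ->
         exists (l : nat) (Rs : 'I_l -> set T),
           [/\ (1 <= l <= k)%N,
               (forall i, Sigma (Rs i)),
               (forall i j, i != j -> Rs i `&` Rs j = set0) &
               S `\` U = \bigcup_(i in [set: 'I_l]) Rs i])].

Definition is_partition (T : choiceType) (Q : {fset (set T)}) : Prop :=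
  [/\ (forall A, A \in Q -> A !=set0),
      (forall A B, A \in Q -> B \in Q -> A != B -> A `&` B = set0) &
      (forall x : T, exists2 A, A \in Q & A x)].

Definition refines (T : choiceType) (R Q : {fset (set T)}) : Prop :=
  forall A, A \in R -> exists2 B, B \in Q & A `<=` B.

(* Conditional expectation of f with respect to the sigma-algebra generated by
   the finite partition Q: on a cell A it equals the average (1/P A) int_A f dP;
   on null cells (defined only a.e.) we take the value 0. *)
Definition condexp_part d (T : measurableType d) (R : realType)
  (P : probability T R) (Q : {fset (set T)}) (f : T -> R) : T -> R :=
  fun x => (\sum_(A <- Q)
    (\1_A x * (if fine (P A) == 0 then 0
               else Rintegral P A f / fine (P A))))%R.

Definition sigma_norm d (T : measurableType d) (R : realType)
  (P : probability T R) (Sigma : set (set T)) (g : T -> R) : \bar R :=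
  ereal_sup [set `| (\int[P]_(x in S) (g x)%:E) |%E | S in Sigma].

(* Pick S in Sigma with |int_S (f - E(f|Q))| > delta.  Splitting every cell A
   of Q into A `&` S and the at most k pieces of A `\` S given by the k-semiring
   axiom yields a refinement R with cells in Sigma, at most k + 1 per cell of Q,
   each inside S or disjoint from it.  As E(f|R) and f have the same integral
   over every cell of R, they have the same integral over S, so
   int_S (E(f|R) - E(f|Q)) = int_S (f - E(f|Q)); finally
   |int_S h| <= ||h||_1 <= ||h||_p on a probability space. *)

From HB Require Import structures.
From mathcomp Require Import all_boot all_order all_algebra finmap.
From mathcomp Require Import all_classical all_reals all_analysis.
From mathcomp Require Import measurable_realfun ring.
Set Implicit Arguments. Unset Strict Implicit. Unset Printing Implicit Defensive.
Import Order.TTheory GRing.Theory Num.Theory.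
Local Open Scope classical_set_scope.
Local Open Scope ring_scope.

Section partition_refinement.
Context {T : choiceType} (Sigma : set (set T)) (S : set T).

Definition on_one_side (B : set T) : Prop := B `<=` S \/ B `&` S = set0.

Definition sigma_split (A : set T) (s : seq (set T)) : Prop :=
  [/\ (forall B, B \in s -> Sigma B),
      (forall B B', B \in s -> B' \in s -> B != B' -> B `&` B' = set0),
      (forall B, B \in s -> B `<=` A),
      (forall x, A x -> exists2 B, B \in s & B x) &
      (forall B, B \in s -> on_one_side B)].

Lemma ksemiring_split k A : ksemiring k Sigma -> Sigma S -> Sigma A ->
  exists2 s, (size s <= k.+1)%N & sigma_split A s.
Proof.
move=> [_ _ SigmaI SigmaD] SigmaS SigmaA.
have [l [Rs [/andP[_ lk] SigmaRs Rs_disj ASE]]] := SigmaD A S SigmaA SigmaS.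
have RsAS i : Rs i `<=` A `\` S by rewrite ASE => x Rx; exists i.
pose s := (A `&` S) :: [seq Rs i | i <- enum 'I_l].
have memsP B : B \in s -> B = A `&` S \/ exists i, B = Rs i.
  by rewrite in_cons => /orP[/eqP->|/mapP[i _ ->]]; [left|right; exists i].
exists s; first by rewrite /= size_map size_enum_ord.
split.
- by move=> B /memsP[->|[i ->]]; [exact: SigmaI|exact: SigmaRs].
- move=> B B' /memsP[->|[i ->]] /memsP[->|[j ->]] BB'.
  + by rewrite eqxx in BB'.
  + by rewrite -subset0 => x [[_ Sx] /RsAS[_]].
  + by rewrite -subset0 => x [/RsAS[_] + [_ Sx]].
  + by apply: Rs_disj; apply: contraNneq BB' => ->.
- by move=> B /memsP[->|[i ->]] x => [[]|/RsAS[]].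
- move=> x Ax; have [Sx|nSx] := pselect (S x).
    by exists (A `&` S); [rewrite mem_head|].
  have : (A `\` S) x by [].
  rewrite ASE => -[i _ Rx]; exists (Rs i) => //.
  by rewrite in_cons map_f ?orbT ?mem_enum.
- move=> B /memsP[->|[i ->]]; first by left => x [].
  by right; rewrite -subset0 => x [/RsAS[_]].
Qed.

Lemma refine_partition_by_splits (Q : {fset (set T)}) (m : nat)
    (split : set T -> seq (set T)) :
  is_partition Q ->
  (forall A, A \in Q -> (size (split A) <= m)%N /\ sigma_split A (split A)) ->
  exists Rp : {fset (set T)},
    [/\ is_partition Rp, refines Rp Q, (forall B, B \in Rp -> Sigma B),
        (#|` Rp| <= #|` Q| * m)%N & (forall B, B \in Rp -> on_one_side B)].
Proof.
move=> [_ Q_disj Q_cover] Qsplit.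
pose Rp := seq_fset tt [seq B <- flatten (map split Q) | B != set0].
have memRpP B : B \in Rp <-> B != set0 /\ exists2 A, A \in Q & B \in split A.
  rewrite seq_fsetE mem_filter; split.
    by move=> /andP[B0 /flattenP[_ /mapP[A AQ ->] BA]]; split => //; exists A.
  move=> [-> [A AQ BA]] /=.
  by apply/flattenP; exists (split A) => //; apply/mapP; exists A.
exists Rp; split.
- split.
  + by move=> B /memRpP[/set0P].
  + move=> B B' /memRpP[_ [A AQ BA]] /memRpP[_ [A' A'Q B'A']] BB'.
    have [[_ [_ A_disj A_sub _ _]] [_ [_ _ A'_sub _ _]]] := (Qsplit A AQ, Qsplit A' A'Q).
    have [AA'|AA'] := eqVneq A A'; first by subst A'; exact: A_disj.
    rewrite -subset0 => x [Bx B'x].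
    by rewrite -(Q_disj A A' AQ A'Q AA'); split; [exact: A_sub Bx|exact: A'_sub B'x].
  + move=> x; have [A AQ Ax] := Q_cover x.
    have [_ [_ _ _ A_cover _]] := Qsplit A AQ.
    have [B BA Bx] := A_cover x Ax; exists B => //.
    by apply/memRpP; split; [apply/set0P; exists x|exists A].
- move=> B /memRpP[_ [A AQ BA]]; exists A => //.
  by have [_ [_ _ A_sub _ _]] := Qsplit A AQ; exact: A_sub.
- by move=> B /memRpP[_ [A AQ BA]]; have [_ [+ _ _ _ _]] := Qsplit A AQ; apply.
- rewrite size_seq_fset (leq_trans (size_undup _)) // size_filter.
  rewrite (leq_trans (count_size _ _)) // size_flatten /shape sumnE !big_map.
  apply: (@leq_trans (\sum_(A <- Q) m)%N).
    by rewrite !big_seq; apply: leq_sum => A /Qsplit[].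
  by rewrite big_const_seq count_predT iter_addn_0 mulnC.
- by move=> B /memRpP[_ [A AQ BA]]; have [_ [_ _ _ _ +]] := Qsplit A AQ; apply.
Qed.

End partition_refinement.

Lemma ksemiring_refine_partition (T : choiceType) k (Sigma : set (set T))
    (Q : {fset (set T)}) (S : set T) :
  ksemiring k Sigma -> is_partition Q -> (forall A, A \in Q -> Sigma A) ->
  Sigma S ->
  exists Rp : {fset (set T)},
    [/\ is_partition Rp, refines Rp Q, (forall B, B \in Rp -> Sigma B),
        (#|` Rp| <= #|` Q| * k.+1)%N & (forall B, B \in Rp -> on_one_side S B)].
Proof.
move=> ksSigma Qpart SigmaQ SigmaS.
have splitA A : exists s : seq (set T), Sigma A ->
    (size s <= k.+1)%N /\ sigma_split Sigma S A s.
  have [SigmaA|] := pselect (Sigma A); last by exists [::].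
  by have [s ? ?] := ksemiring_split ksSigma SigmaS SigmaA; exists s.
have [split splitP] := choice splitA.
apply: (refine_partition_by_splits (split := split) Qpart) => A.
by move=> /SigmaQ /splitP.
Qed.

Section partition_condexp.
Context {d} {T : measurableType d} {R : realType} (P : probability T R).
Local Open Scope ereal_scope.

Lemma integral_partition (Q : {fset (set T)}) (S : set T) (g : T -> R) :
  is_partition Q -> (forall B, B \in Q -> measurable B) -> measurable S ->
  measurable_fun S g ->
  \int[P]_(x in S) (g x)%:E = \sum_(B <- Q) \int[P]_(x in B `&` S) (g x)%:E.
Proof.
move=> [_ Q_disj Q_cover] mQ mS mg.
have SE : S = \big[setU/set0]_(B <- index_enum Q) (val B `&` S).
  rewrite -bigcup_seq; apply/seteqP; split => [x Sx|x [B _ []//]].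
  have [A AQ Ax] := Q_cover x.
  by exists [` AQ]%fset; rewrite /= ?mem_index_enum.
rewrite big_seq_fsetE /= [in LHS]SE integral_bigsetU_EFin -?SE //.
- by move=> B; apply: measurableI => //; apply: mQ; apply: fsvalP.
- exact: index_enum_uniq.
- apply/trivIsetP => B B' _ _ BB'.
  by rewrite setIACA setIid (Q_disj _ _ (fsvalP B) (fsvalP B') BB') set0I.
- exact/measurable_EFinP.
Qed.

Definition cell_mean (f : T -> R) (B : set T) : R :=
  if fine (P B) == 0%R then 0%R else (Rintegral P B f / fine (P B))%R.

Lemma condexp_part_cell (Q : {fset (set T)}) (f : T -> R) (B : set T) (x : T) :
  is_partition Q -> B \in Q -> B x -> condexp_part P Q f x = cell_mean f B.
Proof.
move=> [_ Q_disj _] BQ Bx.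
rewrite /condexp_part (big_fsetD1 B) //= indicE mem_set // mul1r.
rewrite big1_fset ?addr0 // => A; rewrite in_fsetD1 => /andP[AB AQ] _.
rewrite indicE memNset ?mul0r // => Ax.
by have := Q_disj A B AQ BQ AB; rewrite -subset0 => /(_ x); apply.
Qed.

Lemma integrable_condexp_part (Q : {fset (set T)}) (f : T -> R) :
  (forall A, A \in Q -> measurable A) ->
  P.-integrable setT (EFin \o condexp_part P Q f).
Proof.
move=> mQ.
have -> : EFin \o condexp_part P Q f =
    fun x => \sum_(A <- Q | A \in Q) (\1_A x)%:E * (cell_mean f A)%:E.
  by apply/funext => x /=; rewrite /condexp_part sumEFin big_seq.
apply: integrable_sum => // A AQ.
by apply: integrableZr => //; exact: integrable_indic (mQ A AQ).
Qed.

Lemma integral_condexp_part_cell (Q : {fset (set T)}) (f : T -> R) (B : set T) :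
  is_partition Q -> B \in Q -> measurable B -> P.-integrable setT (EFin \o f) ->
  \int[P]_(x in B) (condexp_part P Q f x)%:E = \int[P]_(x in B) (f x)%:E.
Proof.
move=> Qpart BQ mB f_int.
have f_intB : P.-integrable B (EFin \o f) by exact: integrableS f_int.
rewrite (eq_integral (fun=> (cell_mean f B)%:E)); last first.
  by move=> x /[!inE] Bx; rewrite (condexp_part_cell _ Qpart BQ Bx).
rewrite integral_cst // /cell_mean; case: ifPn => [/eqP PB0|PB0].
  rewrite mul0e null_set_integral //; first exact: measurable_int f_intB.
  by apply/eqP; rewrite -fine_eq0 ?fin_num_measure // PB0.
rewrite -[X in _ * X]fineK ?fin_num_measure // -EFinM divfK //.
by rewrite /Rintegral fineK //; exact: integrable_fin_num.
Qed.

Lemma integral_condexp_part_on_one_side (Q : {fset (set T)}) (S : set T) (f : T -> R) :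
  is_partition Q -> (forall B, B \in Q -> measurable B) -> measurable S ->
  (forall B, B \in Q -> on_one_side S B) -> P.-integrable setT (EFin \o f) ->
  \int[P]_(x in S) (condexp_part P Q f x)%:E = \int[P]_(x in S) (f x)%:E.
Proof.
move=> Qpart mQ mS Qside f_int.
have mfunS g : P.-integrable setT (EFin \o g) -> measurable_fun S g.
  move=> /measurable_int/measurable_EFinP.
  exact: measurable_funS.
have [mE mf] := (mfunS _ (integrable_condexp_part f mQ), mfunS _ f_int).
rewrite !(integral_partition Qpart mQ mS) //.
apply: eq_big_seq => B BQ; have [BS|BS0] := Qside B BQ.
  by rewrite setIidl // (integral_condexp_part_cell Qpart BQ (mQ B BQ) f_int).
by rewrite BS0 !integral_set0.
Qed.

End partition_condexp.

Section Lnorm_probability.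
Context {d} {T : measurableType d} {R : realType} (P : probability T R).
Local Open Scope ereal_scope.

Lemma Lnorm1_le_Lnorm (p : R) (h : T -> R) : (1 <= p)%R -> measurable_fun setT h ->
  Lnorm P 1 (EFin \o h) <= Lnorm P p%:E (EFin \o h).
Proof.
move=> p1 mh; have [->//|pn1] := eqVneq p 1%R.
have p1' : (1 < p)%R by rewrite lt_neqAle eq_sym pn1.
have p0 : (0 < p)%R by rewrite (lt_trans ltr01).
pose q := (p / (p - 1))%R.
have q0 : (0 < q)%R by rewrite divr_gt0 // subr_gt0.
have pq : (p^-1 + q^-1 = 1)%R by rewrite /q invf_div; field; rewrite gt_eqF.
have := @hoelder _ _ _ P h (cst 1%R) p q mh (measurable_cst _) p0 q0 pq.
have -> : Lnorm P q%:E (EFin \o cst 1%R) = 1.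
  rewrite (@eq_Lnorm _ _ _ P _ _ (cst 1)) // Lnorm_cst1.
  apply: (eq_trans (congr1 (fun x => x `^ q^-1) (probability_setT P))).
  exact: poweR1r.
by rewrite mule1 (@eq_Lnorm _ _ _ P _ _ (EFin \o h)) // => x /=; rewrite mulr1.
Qed.

Lemma Lnorm_lty_integrable (p : R) (h : T -> R) : (1 <= p)%R ->
  measurable_fun setT h -> Lnorm P p%:E (EFin \o h) < +oo ->
  P.-integrable setT (EFin \o h).
Proof.
move=> p1 mh hp; apply/integrableP; split.
  exact/measurable_EFinP.
by rewrite -Lnorm1; exact: le_lt_trans (Lnorm1_le_Lnorm p1 mh) hp.
Qed.

Lemma abse_integral_le_Lnorm (p : R) (S : set T) (h : T -> R) : (1 <= p)%R ->
  measurable S -> measurable_fun setT h ->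
  `| \int[P]_(x in S) (h x)%:E | <= Lnorm P p%:E (EFin \o h).
Proof.
move=> p1 mS mh.
have mEh : measurable_fun setT (EFin \o h) by exact/measurable_EFinP.
apply: le_trans (le_abse_integral _ mS (measurable_funS measurableT (subsetT S) mEh)) _.
apply: le_trans (ge0_subset_integral _ mS measurableT _ _ (subsetT S)) _ => //.
  exact: measurableT_comp.
by rewrite -Lnorm1; exact: Lnorm1_le_Lnorm.
Qed.

End Lnorm_probability.

Theorem lemma3p3 (d : measure_display) (T : measurableType d) (R : realType)
  (P : probability T R) (k : nat) (p delta : R)
  (Sigma : set (set T)) (Q : {fset (set T)}) (f : T -> R) :
  (0 < k)%N -> 1 <= p -> 0 < delta -> delta <= 1 ->
  ksemiring k Sigma -> (forall S, Sigma S -> measurable S) ->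
  is_partition Q -> (forall A, A \in Q -> Sigma A) ->
  measurable_fun setT f -> (Lnorm P p%:E (fun x => (f x)%:E) < +oo)%E ->
  (delta%:E < sigma_norm P Sigma (fun x => f x - condexp_part P Q f x)%R)%E ->
  exists Rp : {fset (set T)},
    [/\ is_partition Rp, refines Rp Q, (forall A, A \in Rp -> Sigma A),
        (#|` Rp|%fset <= #|` Q|%fset * k.+1)%N &
        (delta%:E < Lnorm P p%:E (fun x => (condexp_part P Rp f x - condexp_part P Q f x)%R%:E))%E].
Proof.
move=> _ p1 _ _ ksSigma SigmaM Qpart SigmaQ mf fLp.
move=> /ereal_sup_gt[_ [S SigmaS <-] ltdS].
have [Rp [Rpart RpQ SigmaRp cardRp Rpside]] :=
  ksemiring_refine_partition ksSigma Qpart SigmaQ SigmaS.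
exists Rp; split => //.
have mS := SigmaM S SigmaS.
have f_int := Lnorm_lty_integrable p1 mf fLp.
have mRp A : A \in Rp -> measurable A by move=> /SigmaRp /SigmaM.
have mQ A : A \in Q -> measurable A by move=> /SigmaQ /SigmaM.
have [ER_int EQ_int] :=
  (integrable_condexp_part P f mRp, integrable_condexp_part P f mQ).
have intS g : P.-integrable setT (EFin \o g) -> P.-integrable S (EFin \o g).
  exact: integrableS.
have mfun g : P.-integrable setT (EFin \o g) -> measurable_fun setT g.
  by move=> /measurable_int /measurable_EFinP.
apply: (lt_le_trans ltdS).
rewrite [X in `|X|%E](_ : _ = (\int[P]_(x in S)
    ((condexp_part P Rp f x)%:E - (condexp_part P Q f x)%:E))%E).
  apply: abse_integral_le_Lnorm => //.
  by apply: measurable_funB; exact: mfun.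
under eq_integral do rewrite EFinB.
rewrite !integralB_EFin ?intS //.
by rewrite (integral_condexp_part_on_one_side Rpart mRp mS Rpside f_int).
Qed.
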